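(* Let $1\le r\le N-1$ and let $\mathcal A=\mathbb{C}^{N\times N}((\epsilon))$ denote the ring of matrix asymptotic expansions $M_0+M_1\epsilon+O(\epsilon^2)$, $M_i\in\mathbb{C}^{N\times N}$, $\epsilon\to0$. Write matrices in block form $\begin{pmatrix}A&B\\C&D\end{pmatrix}$ with $A\in\mathbb{C}^{r\times r}$, $B\in\mathbb{C}^{r\times(N-r)}$, $C\in\mathbb{C}^{(N-r)\times r}$, $D\in\mathbb{C}^{(N-r)\times(N-r)}$. Let $\mathfrak K$ be the set of matrices with $A=0,B=0$, and $\mathfrak L$ the set of matrices with $B=0,D=0$; let $\mathcal A_{\mathfrak K}=\{K\in\mathcal A: K|_{\epsilon=0}\in\mathfrak K\}$ and $\mathcal A_{\mathfrak L}=\{L\in\mathcal A: L|_{\epsilon=0}\in\mathfrak L\}$. Then: (1) $\mathcal A_{\mathfrak K}$ and $\mathcal A_{\mathfrak L}$ are subrings (without identity) of $\mathcal A$. (2) If $K\in\mathcal A_{\mathfrak K}$ with $\det K=O(\epsilon^r)$ as $\epsilon\to0$, then $K^{-1}\in\epsilon^{-1}\mathcal A_{\mathfrak L}$; conversely, if $L\in\epsilon^{-1}\mathcal A_{\mathfrak L}$ with $\det L=O(\epsilon^{-r})$, then $L^{-1}\in\mathcal A_{\mathfrak K}$. (3) If $K=\begin{pmatrix}0&0\\C_0&D_0\end{pmatrix}+\begin{pmatrix}A_1&B_1\\C_1&D_1\end{pmatrix}\epsilon+O(\epsilon^2)\in\mathcal A_{\mathfrak K}$, then $\det K=\epsilon^r\det\begin{pmatrix}A_1&B_1\\C_0&D_0\end{pmatrix}+O(\epsilon^{r+1})$.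 (4) If $L=\begin{pmatrix}A_0&0\\C_0&0\end{pmatrix}\epsilon^{-1}+\begin{pmatrix}A_1&B_1\\C_1&D_1\end{pmatrix}+O(\epsilon)\in\epsilon^{-1}\mathcal A_{\mathfrak L}$, then $\det L=\epsilon^{-r}\det\begin{pmatrix}A_0&B_1\\C_0&D_1\end{pmatrix}+O(\epsilon^{-r+1})$. (5) $\mathcal A_{\mathfrak K}\cdot\mathcal A\subset\mathcal A_{\mathfrak K}$ and $\mathcal A\cdot\mathcal A_{\mathfrak L}\subset\mathcal A_{\mathfrak L}$ (right and left ideals, respectively). (6) $\epsilon^{-1}\mathcal A_{\mathfrak L}\cdot\mathcal A_{\mathfrak K}\subset\mathcal A$.
   Context: A condition $\det X=O(\epsilon^{k})$ is understood in the paper's sense of exact order: $\det X=c\,\epsilon^{k}+O(\epsilon^{k+1})$ with $c\neq0$. $\epsilon^{-1}\mathcal A_{\mathfrak L}$ denotes the set of expansions $\epsilon^{-1}L$ with $L\in\mathcal A_{\mathfrak L}$. *)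

From HB Require Import structures.
From mathcomp Require Import all_boot all_order all_algebra.
From mathcomp Require Import complex.
From mathcomp Require Import reals.
Set Implicit Arguments. Unset Strict Implicit. Unset Printing Implicit Defensive.
Import Order.TTheory GRing.Theory Num.Theory.
Local Open Scope ring_scope.

(* A formal matrix expansion  M_0 + M_1 eps + M_2 eps^2 + ...  (element of
   C^{N x N}[[eps]]) is represented by its coefficient sequence. *)
Definition mxser (F : Type) (n : nat) := nat -> 'M[F]_n.

Section Ser.
Variables (F : comRingType) (n : nat).

Definition addS (K M : mxser F n) : mxser F n := fun k => K k + M k.
Definition oppS (K : mxser F n) : mxser F n := fun k => - K k.
Definition zeroS : mxser F n := fun _ => 0.
Definition mulS (K M : mxser F n) : mxser F n :=
  fun k => \sum_(i < k.+1) K i *m M (k - i)%N.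
Definition epsI : mxser F n := fun k => if k == 1%N then 1%:M else 0.

Definition truncS (m : nat) (K : mxser F n) : 'M[{poly F}]_n :=
  \matrix_(i, j) \poly_(l < m) (K l i j).
(* coefficient sequence of det K : the coefficient of eps^k of det K only
   depends on the coefficients of K of order <= k *)
Definition detS (K : mxser F n) : nat -> F :=
  fun k => (\det (truncS k.+1 K))`_k.
End Ser.

(* f = O(eps^k) in the exact-order sense: f = c eps^k + O(eps^(k+1)), c != 0 *)
Definition exact_order (F : ringType) (f : nat -> F) (k : nat) :=
  (forall j, (j < k)%N -> f j = 0) /\ f k != 0.

Definition expands_as (F : ringType) (f : nat -> F) (k : nat) (c : F) :=
  (forall j, (j < k)%N -> f j = 0) /\ f k = c.

Section Blocks.
Variables (F : comRingType) (r s : nat).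
(* block structure with A : r x r, B : r x s, C : s x r, D : s x s, N = r + s *)
Definition frakK (M : 'M[F]_(r + s)) := ulsubmx M = 0 /\ ursubmx M = 0.
Definition frakL (M : 'M[F]_(r + s)) := ursubmx M = 0 /\ drsubmx M = 0.
Definition inAK (K : mxser F (r + s)) := frakK (K 0%N).
Definition inAL (L : mxser F (r + s)) := frakL (L 0%N).
End Blocks.

From HB Require Import structures.
From mathcomp Require Import all_boot all_order all_algebra.
From mathcomp Require Import complex reals boolp.
Import Order.TTheory GRing.Theory Num.Theory.
Set Implicit Arguments. Unset Strict Implicit. Unset Printing Implicit Defensive.
Local Open Scope ring_scope.

(* Every K in A_K factors as K = diag(eps I_r, I_s) Q, where Q is an expansion
   with constant term [A_1 B_1; C_0 D_0], and every L in A_L as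
   L = Q' diag(I_r, eps I_s), where Q' has constant term [A_0 B_1; C_0 D_1].
   Pulling eps out of the first r rows (resp. the last s columns) gives (3) and
   (4). When these leading determinants are nonzero, Q and Q' are invertible
   expansions, and since diag(eps I_r, I_s) diag(I_r, eps I_s) = eps, the
   expansions Q^-1 diag(I_r, eps I_s) and diag(eps I_r, I_s) Q'^-1 are eps times
   the inverses of K and L. Parts (1), (5) and (6) only involve constant terms. *)

Section SeriesRing.
Variables (F : comRingType) (n : nat).
Local Notation S := (mxser F n).

Lemma mulSE (A B : S) k : mulS A B k = \sum_(i < k.+1) A i *m B (k - i)%N.
Proof. by []. Qed.

Lemma mulS_rev (A B : S) k : mulS A B k = \sum_(j < k.+1) A (k - j)%N *m B j.
Proof.
rewrite mulSE (reindex_inj rev_ord_inj) /=.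
by apply: eq_bigr => j _; rewrite (sub_ordK j).
Qed.

Lemma mulS0 (A B : S) : mulS A B 0%N = A 0%N *m B 0%N.
Proof. by rewrite mulSE big_ord1. Qed.

Lemma mulSA (A B C : S) : mulS (mulS A B) C = mulS A (mulS B C).
Proof.
apply: funext => i; symmetry; rewrite mulSE mulS_rev.
pose c (j k : nat) := A j *m (B (i - j - k)%N *m C k).
transitivity (\sum_(j < i.+1) \sum_(k < i.+1 | (k <= i - j)%N) c j k).
  apply: eq_bigr => /= j _; rewrite mulS_rev mulmx_sumr.
  by rewrite (big_ord_narrow_leq (leq_subr _ _)).
rewrite (exchange_big_dep predT) //=; apply: eq_bigr => k _.
transitivity (\sum_(j < i.+1 | (j <= i - k)%N) c j k).
  apply: eq_bigl => j; rewrite -ltnS -(ltnS j) -!subSn ?leq_ord //.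
  by rewrite -subn_gt0 -(subn_gt0 j) -!subnDA addnC.
rewrite (big_ord_narrow_leq (leq_subr _ _)) mulSE mulmx_suml.
by apply: eq_bigr => j _; rewrite /c -!subnDA addnC mulmxA.
Qed.

Definition oneS : S := fun k => if k == 0%N then 1%:M else 0.

Lemma mul1S (A : S) : mulS oneS A = A.
Proof.
apply: funext => k; rewrite mulSE big_ord_recl subn0 mul1mx.
by rewrite big1 ?addr0 // => j _; rewrite mul0mx.
Qed.

Lemma mulS1 (A : S) : mulS A oneS = A.
Proof.
apply: funext => k; rewrite mulS_rev big_ord_recl subn0 mulmx1.
by rewrite big1 ?addr0 // => j _; rewrite mulmx0.
Qed.

Lemma mulS_epsC (A : S) : mulS A (epsI F n) = mulS (epsI F n) A.
Proof.
apply: funext => k; rewrite mulS_rev mulSE /epsI.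
by apply: eq_bigr => j _; case: eqP; rewrite ?mulmx1 ?mul1mx ?mulmx0 ?mul0mx.
Qed.

Definition trS (A : S) : S := fun k => (A k)^T.

Lemma trS_mul (A B : S) : trS (mulS A B) = mulS (trS B) (trS A).
Proof.
apply: funext => k; rewrite /trS mulS_rev mulSE raddf_sum.
by apply: eq_bigr => j _; exact: trmx_mul.
Qed.

Lemma trS_one : trS oneS = oneS.
Proof. by apply: funext => k; rewrite /trS /oneS; case: eqP; rewrite ?trmx1 ?trmx0. Qed.

Lemma trSK : involutive trS.
Proof. by move=> A; apply: funext => k; rewrite /trS trmxK. Qed.

End SeriesRing.

Section SeriesInverse.
Variables (F : comUnitRingType) (n : nat).
Local Notation S := (mxser F n).

(* [invS_seq Q k] lists the first [k.+1] coefficients of the inverse, so that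
   the recursion may use all the previous ones. *)
Fixpoint invS_seq (Q : S) (k : nat) : seq 'M[F]_n :=
  if k is k'.+1 then let s := invS_seq Q k' in
    rcons s (- (invmx (Q 0%N) *m \sum_(i < k'.+1) Q i.+1 *m nth 0 s (k' - i)%N))
  else [:: invmx (Q 0%N)].

Definition invS (Q : S) : S := fun k => nth 0 (invS_seq Q k) k.

Lemma size_invS_seq Q k : size (invS_seq Q k) = k.+1.
Proof. by elim: k => //= k IH; rewrite size_rcons IH. Qed.

Lemma nth_invS_seq Q k j : (j <= k)%N -> nth 0 (invS_seq Q k) j = invS Q j.
Proof.
elim: k => [|k IH]; first by rewrite leqn0 => /eqP->.
rewrite leq_eqVlt => /orP[/eqP->//|]; rewrite ltnS => hj.
by rewrite /= nth_rcons size_invS_seq ltnS hj IH.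
Qed.

Lemma invS0 Q : invS Q 0%N = invmx (Q 0%N).
Proof. by []. Qed.

Lemma invSS Q k : invS Q k.+1 =
  - (invmx (Q 0%N) *m \sum_(i < k.+1) Q i.+1 *m invS Q (k - i)%N).
Proof.
rewrite /invS /= nth_rcons size_invS_seq ltnn eqxx; congr (- (_ *m _)).
by apply: eq_bigr => i _; rewrite nth_invS_seq // leq_subr.
Qed.

Lemma mulSV Q : Q 0%N \in unitmx -> mulS Q (invS Q) = oneS F n.
Proof.
move=> Q0u; apply: funext => -[|k]; first by rewrite mulS0 invS0 mulmxV.
rewrite mulSE big_ord_recl subn0 invSS mulmxN mulmxA mulmxV // mul1mx.
by rewrite addrC; apply/eqP; rewrite subr_eq0; apply/eqP/eq_bigr => i _; rewrite subSS.
Qed.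

(* The transpose of a right inverse of [Q^T] is a left inverse of [Q]. *)
Lemma mulVS Q : Q 0%N \in unitmx -> mulS (invS Q) Q = oneS F n.
Proof.
move=> Q0u; have QT0u : trS Q 0%N \in unitmx by rewrite unitmx_tr.
have linvQ : mulS (trS (invS (trS Q))) Q = oneS F n.
  by rewrite -{2}[Q]trSK -trS_mul mulSV // trS_one.
suff -> : invS Q = trS (invS (trS Q)) by [].
by rewrite -[LHS]mul1S -linvQ mulSA mulSV // mulS1.
Qed.

End SeriesInverse.

Section DetFactorX.
Variables (F : comRingType) (r s : nat).

Lemma mulX_drop_poly1 (p : {poly F}) : p`_0 = 0 -> 'X * drop_poly 1 p = p.
Proof.
move=> p0; apply/polyP => -[|i]; rewrite coefXM coef_drop_poly //=.
by rewrite addn1.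
Qed.

Lemma coef0_det (P : 'M[{poly F}]_(r + s)) :
  (\det P)`_0 = \det (map_mx (fun p : {poly F} => p`_0) P).
Proof.
rewrite -horner_coef0 -horner_evalE -det_map_mx; congr (\det _).
by apply/matrixP => i j; rewrite !mxE /= horner_evalE horner_coef0.
Qed.

Lemma det_usubmx_divX (P : 'M[{poly F}]_(r + s)) :
  (forall i j, (usubmx P i j)`_0 = 0) ->
  \det P = 'X^r * \det (col_mx (map_mx (drop_poly 1) (usubmx P)) (dsubmx P)).
Proof.
move=> P0; set Q := col_mx _ _.
have -> : P = block_mx 'X%:M 0 0 1%:M *m Q.
  rewrite mul_block_col !mul0mx mul1mx addr0 add0r mul_scalar_mx -[LHS]vsubmxK.
  congr col_mx; apply/matrixP => i j.
  by rewrite !mxE mulX_drop_poly1 //; have := P0 i j; rewrite mxE.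
by rewrite det_mulmx det_ublock det_scalar det1 mulr1.
Qed.

Lemma det_rsubmx_divX (P : 'M[{poly F}]_(r + s)) :
  (forall i j, (rsubmx P i j)`_0 = 0) ->
  \det P = 'X^s * \det (row_mx (lsubmx P) (map_mx (drop_poly 1) (rsubmx P))).
Proof.
move=> P0; set Q := row_mx _ _.
have -> : P = Q *m block_mx 1%:M 0 0 'X%:M.
  rewrite mul_row_block !mulmx0 mulmx1 addr0 add0r mul_mx_scalar -[LHS]hsubmxK.
  congr row_mx; apply/matrixP => i j.
  by rewrite !mxE mulX_drop_poly1 //; have := P0 i j; rewrite mxE.
by rewrite det_mulmx det_lblock !det_scalar expr1n mul1r mulrC.
Qed.

Lemma detS_usubmx0 (K : mxser F (r + s)) : (0 < r)%N -> usubmx (K 0%N) = 0 ->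
  expands_as (detS K) r (\det (col_mx (usubmx (K 1%N)) (dsubmx (K 0%N)))).
Proof.
move=> r_gt0 K0; have trunc0 m i j : (usubmx (truncS m.+1 K) i j)`_0 = 0.
  by rewrite !mxE coef_poly /=; move/matrixP: K0 => /(_ i j); rewrite !mxE.
split=> [j ltjr|]; rewrite /detS det_usubmx_divX // coefXnM ?ltjr //.
rewrite ltnn subnn coef0_det; congr (\det _); apply/matrixP => i j.
rewrite !mxE; case: split => k; rewrite !mxE ?coef_drop_poly coef_poly //.
by rewrite ltnS r_gt0.
Qed.

Lemma detS_rsubmx0 (L : mxser F (r + s)) : (0 < s)%N -> rsubmx (L 0%N) = 0 ->
  expands_as (detS L) s (\det (row_mx (lsubmx (L 0%N)) (rsubmx (L 1%N)))).
Proof.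
move=> s_gt0 L0; have trunc0 m i j : (rsubmx (truncS m.+1 L) i j)`_0 = 0.
  by rewrite !mxE coef_poly /=; move/matrixP: L0 => /(_ i j); rewrite !mxE.
split=> [j ltjs|]; rewrite /detS det_rsubmx_divX // coefXnM ?ltjs //.
rewrite ltnn subnn coef0_det; congr (\det _); apply/matrixP => i j.
rewrite !mxE; case: split => k; rewrite !mxE ?coef_drop_poly coef_poly //.
by rewrite ltnS s_gt0.
Qed.

End DetFactorX.

Section BlockSeries.
Variables (F : comRingType) (r s : nat).
Local Notation S := (mxser F (r + s)).

Lemma frakKE (M : 'M[F]_(r + s)) : frakK M <-> usubmx M = 0.
Proof.
split=> [[ul0 ur0]|u0].
  by have := submxK M; rewrite ul0 ur0 => <-; rewrite block_mxEv row_mx0 col_mxKu.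
move/matrixP: u0 => u0; split; apply/matrixP => i j; rewrite !mxE.
  by move: (u0 i (lshift s j)); rewrite !mxE.
by move: (u0 i (rshift r j)); rewrite !mxE.
Qed.

Lemma frakLE (M : 'M[F]_(r + s)) : frakL M <-> rsubmx M = 0.
Proof.
split=> [[ur0 dr0]|r0].
  by have := submxK M; rewrite ur0 dr0 => <-; rewrite block_mxEh row_mxKr col_mx0.
move/matrixP: r0 => r0; split; apply/matrixP => i j; rewrite !mxE.
  by move: (r0 (lshift s i) j); rewrite !mxE.
by move: (r0 (rshift r i) j); rewrite !mxE.
Qed.

Lemma inAK0 : inAK (zeroS F (r + s)).
Proof. by apply/frakKE; rewrite /zeroS raddf0. Qed.

Lemma inAKD (K1 K2 : S) : inAK K1 -> inAK K2 -> inAK (addS K1 K2).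
Proof. by move=> /frakKE K10 /frakKE K20; apply/frakKE; rewrite /addS raddfD /= K10 K20 addr0. Qed.

Lemma inAKN (K : S) : inAK K -> inAK (oppS K).
Proof. by move=> /frakKE K0; apply/frakKE; rewrite /oppS raddfN /= K0 oppr0. Qed.

Lemma inAK_mulr (K M : S) : inAK K -> inAK (mulS K M).
Proof. by move=> /frakKE K0; apply/frakKE; rewrite mulS0 -mul_usub_mx K0 mul0mx. Qed.

Lemma inAL0 : inAL (zeroS F (r + s)).
Proof. by apply/frakLE; rewrite /zeroS raddf0. Qed.

Lemma inALD (L1 L2 : S) : inAL L1 -> inAL L2 -> inAL (addS L1 L2).
Proof. by move=> /frakLE L10 /frakLE L20; apply/frakLE; rewrite /addS raddfD /= L10 L20 addr0. Qed.

Lemma inALN (L : S) : inAL L -> inAL (oppS L).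
Proof. by move=> /frakLE L0; apply/frakLE; rewrite /oppS raddfN /= L0 oppr0. Qed.

Lemma inAL_mull (M L : S) : inAL L -> inAL (mulS M L).
Proof. by move=> /frakLE L0; apply/frakLE; rewrite mulS0 -mulmx_rsub L0 mulmx0. Qed.

Lemma mulS_AL_AK0 (L K : S) : inAL L -> inAK K -> mulS L K 0%N = 0.
Proof.
move=> /frakLE L0 /frakKE K0; rewrite mulS0 -[L 0%N]hsubmxK -[K 0%N]vsubmxK.
by rewrite L0 K0 mul_row_col mulmx0 mul0mx addr0.
Qed.

Definition linS (A B : 'M[F]_(r + s)) : S :=
  fun k => if k == 0%N then A else if k == 1%N then B else 0.

Lemma mul_linS (A B : 'M_(r + s)) (M : S) k :
  mulS (linS A B) M k.+1 = A *m M k.+1 + B *m M k.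
Proof.
rewrite mulSE !big_ord_recl big1 ?addr0 ?subn1 // => i _.
by rewrite /linS /= mul0mx.
Qed.

Lemma mulS_linS (M : S) (A B : 'M_(r + s)) k :
  mulS M (linS A B) k.+1 = M k.+1 *m A + M k *m B.
Proof.
rewrite mulS_rev !big_ord_recl big1 ?addr0 ?subn1 // => i _.
by rewrite /linS /= mulmx0.
Qed.

Lemma mul_linS_eps (A B C D : 'M_(r + s)) :
  A *m C = 0 -> A *m D + B *m C = 1%:M -> B *m D = 0 ->
  mulS (linS A B) (linS C D) = epsI F (r + s).
Proof.
move=> AC ADBC BD; apply: funext => -[|[|[|k]]].
- by rewrite mulS0.
- by rewrite mul_linS.
- by rewrite mul_linS /linS /= mulmx0 add0r.
- by rewrite mul_linS /linS /= !mulmx0 addr0.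
Qed.

Definition projU : 'M[F]_(r + s) := block_mx 1%:M 0 0 0.
Definition projD : 'M[F]_(r + s) := block_mx 0 0 0 1%:M.

Lemma mul_projU_col (U : 'M_(r, r + s)) V : projU *m col_mx U V = col_mx U 0.
Proof. by rewrite mul_block_col !mul0mx mul1mx !addr0. Qed.

Lemma mul_projD_col (U : 'M_(r, r + s)) V : projD *m col_mx U V = col_mx 0 V.
Proof. by rewrite mul_block_col !mul0mx mul1mx !add0r. Qed.

Lemma mul_row_projU (X : 'M_(r + s, r)) Y : row_mx X Y *m projU = row_mx X 0.
Proof. by rewrite mul_row_block !mulmx0 mulmx1 !addr0. Qed.

Lemma mul_row_projD (X : 'M_(r + s, r)) Y : row_mx X Y *m projD = row_mx 0 Y.
Proof. by rewrite mul_row_block !mulmx0 mulmx1 !add0r. Qed.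

Let mul_proj := (mulmx_block, mul0mx, mulmx0, mul1mx, mulmx1, addr0, add0r, block_mx0).

Lemma projUU : projU *m projU = projU. Proof. by rewrite !mul_proj. Qed.
Lemma projDD : projD *m projD = projD. Proof. by rewrite !mul_proj. Qed.
Lemma projUD : projU *m projD = 0. Proof. by rewrite !mul_proj. Qed.
Lemma projDU : projD *m projU = 0. Proof. by rewrite !mul_proj. Qed.
Lemma projU_add_projD : projU + projD = 1%:M.
Proof. by rewrite add_block_mx !(addr0, add0r) -scalar_mx_block. Qed.

Definition scaleK : S := linS projD projU.
Definition scaleL : S := linS projU projD.

Lemma scaleKL : mulS scaleK scaleL = epsI F (r + s).
Proof. by apply: mul_linS_eps; rewrite ?projDU ?projUD // projDD projUU addrC projU_add_projD. Qed.

Lemma scaleLK : mulS scaleL scaleK = epsI F (r + s).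
Proof. by apply: mul_linS_eps; rewrite ?projDU ?projUD // projUU projDD projU_add_projD. Qed.

Definition unscaleK (K : S) : S := fun k => col_mx (usubmx (K k.+1)) (dsubmx (K k)).
Definition unscaleL (L : S) : S := fun k => row_mx (lsubmx (L k)) (rsubmx (L k.+1)).

Lemma scaleK_unscaleK (K : S) : inAK K -> mulS scaleK (unscaleK K) = K.
Proof.
move=> /frakKE K0; apply: funext => -[|k].
  by rewrite mulS0 mul_projD_col -K0 vsubmxK.
by rewrite mul_linS mul_projD_col mul_projU_col add_col_mx addr0 add0r vsubmxK.
Qed.

Lemma unscaleL_scaleL (L : S) : inAL L -> mulS (unscaleL L) scaleL = L.
Proof.
move=> /frakLE L0; apply: funext => -[|k].
  by rewrite mulS0 mul_row_projU -L0 hsubmxK.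
by rewrite mulS_linS mul_row_projU mul_row_projD add_row_mx addr0 add0r hsubmxK.
Qed.

End BlockSeries.

Section BlockInverse.
Variables (F : comUnitRingType) (r s : nat).
Local Notation S := (mxser F (r + s)).

Lemma AK_inv (K : S) : inAK K -> unscaleK K 0%N \in unitmx ->
  exists L : S, inAL L /\ mulS K L = epsI F (r + s) /\ mulS L K = epsI F (r + s).
Proof.
move=> AK_K Q0u; set Q := unscaleK K.
exists (mulS (invS Q) (scaleL F r s)); split; [|split].
- apply/frakLE; rewrite mulS0 -[invS Q 0%N]hsubmxK.
  by rewrite [scaleL _ _ _ _]/= mul_row_projU row_mxKr.
- by rewrite -(scaleK_unscaleK AK_K) mulSA -(mulSA Q) mulSV // mul1S scaleKL.
- rewrite -(scaleK_unscaleK AK_K) mulSA -(mulSA (scaleL _ _ _)) scaleLK -mulS_epsC.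
  by rewrite -mulSA mulVS // mul1S.
Qed.

Lemma AL_inv (L : S) : inAL L -> unscaleL L 0%N \in unitmx ->
  exists K : S, inAK K /\ mulS L K = epsI F (r + s) /\ mulS K L = epsI F (r + s).
Proof.
move=> AL_L Q0u; set Q := unscaleL L.
exists (mulS (scaleK F r s) (invS Q)); split; [|split].
- apply/frakKE; rewrite mulS0 -[invS Q 0%N]vsubmxK.
  by rewrite [scaleK _ _ _ _]/= mul_projD_col col_mxKu.
- rewrite -(unscaleL_scaleL AL_L) mulSA -(mulSA (scaleL _ _ _)) scaleLK -mulS_epsC.
  by rewrite -mulSA mulSV // mul1S.
- by rewrite -(unscaleL_scaleL AL_L) mulSA -(mulSA (invS Q)) mulVS // mul1S scaleKL.
Qed.

End BlockInverse.

Section LeadingDeterminant.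
Variables (F : comRingType) (r s : nat).

Lemma block_mx_usub_dsub (A B : 'M[F]_(r + s)) :
  block_mx (ulsubmx A) (ursubmx A) (dlsubmx B) (drsubmx B) = col_mx (usubmx A) (dsubmx B).
Proof. by rewrite block_mxEv !hsubmxK. Qed.

Lemma block_mx_lsub_rsub (A B : 'M[F]_(r + s)) :
  block_mx (ulsubmx A) (ursubmx B) (dlsubmx A) (drsubmx B) = row_mx (lsubmx A) (rsubmx B).
Proof.
rewrite block_mxEh; congr row_mx; apply/matrixP => i j; rewrite -(splitK i);
  by case: split => k; rewrite ?col_mxEu ?col_mxEd !mxE.
Qed.

Lemma detS_AK (K : mxser F (r + s)) : (0 < r)%N -> inAK K ->
  expands_as (detS K) r
    (\det (block_mx (ulsubmx (K 1%N)) (ursubmx (K 1%N))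
                    (dlsubmx (K 0%N)) (drsubmx (K 0%N)))).
Proof. by move=> r_gt0 /frakKE K0; rewrite block_mx_usub_dsub; apply: detS_usubmx0. Qed.

Lemma detS_AL (L : mxser F (r + s)) : (0 < s)%N -> inAL L ->
  expands_as (detS L) s
    (\det (block_mx (ulsubmx (L 0%N)) (ursubmx (L 1%N))
                    (dlsubmx (L 0%N)) (drsubmx (L 1%N)))).
Proof. by move=> s_gt0 /frakLE L0; rewrite block_mx_lsub_rsub; apply: detS_rsubmx0. Qed.

End LeadingDeterminant.

Section FieldInverse.
Variables (F : fieldType) (r s : nat).

Lemma unscaleK0_unit (K : mxser F (r + s)) : (0 < r)%N -> inAK K ->
  exact_order (detS K) r -> unscaleK K 0%N \in unitmx.
Proof.
move=> r_gt0 AK_K [_]; rewrite unitmxE unitfE.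
by rewrite (detS_AK r_gt0 AK_K).2 block_mx_usub_dsub.
Qed.

Lemma unscaleL0_unit (L : mxser F (r + s)) : (0 < s)%N -> inAL L ->
  exact_order (detS L) s -> unscaleL L 0%N \in unitmx.
Proof.
move=> s_gt0 AL_L [_]; rewrite unitmxE unitfE.
by rewrite (detS_AL s_gt0 AL_L).2 block_mx_lsub_rsub.
Qed.

End FieldInverse.

(* [eps^-1 L] is represented by [L]: then [det (eps^-1 L) = eps^-(r+s) det L],
   and [(eps^-1 L) K = 1] reads [mulS L K = epsI]. *)
Theorem proposition1 (R : realType) (r s : nat) (hr : (0 < r)%N) (hs : (0 < s)%N) :
  let C := complex R in
  (* (1) *)
  ((inAK (zeroS C (r + s)) /\
    (forall K1 K2 : mxser C (r + s), inAK K1 -> inAK K2 ->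
       [/\ inAK (addS K1 K2), inAK (oppS K1) & inAK (mulS K1 K2)])) /\
   (inAL (zeroS C (r + s)) /\
    (forall L1 L2 : mxser C (r + s), inAL L1 -> inAL L2 ->
       [/\ inAL (addS L1 L2), inAL (oppS L1) & inAL (mulS L1 L2)]))) /\
  (* (2) *)
  ((forall K : mxser C (r + s), inAK K -> exact_order (detS K) r ->
      exists L : mxser C (r + s),
        inAL L /\ mulS K L = epsI C (r + s) /\ mulS L K = epsI C (r + s)) /\
   (forall L : mxser C (r + s), inAL L -> exact_order (detS L) s ->
      exists K : mxser C (r + s),
        inAK K /\ mulS L K = epsI C (r + s) /\ mulS K L = epsI C (r + s))) /\
  (* (3) *)
  (forall K : mxser C (r + s), inAK K ->
     expands_as (detS K) r
       (\det (block_mx (ulsubmx (K 1%N)) (ursubmx (K 1%N))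
                       (dlsubmx (K 0%N)) (drsubmx (K 0%N))))) /\
  (* (4) *)
  (forall L : mxser C (r + s), inAL L ->
     expands_as (detS L) s
       (\det (block_mx (ulsubmx (L 0%N)) (ursubmx (L 1%N))
                       (dlsubmx (L 0%N)) (drsubmx (L 1%N))))) /\
  (* (5) *)
  ((forall K M : mxser C (r + s), inAK K -> inAK (mulS K M)) /\
   (forall M L : mxser C (r + s), inAL L -> inAL (mulS M L))) /\
  (* (6) *)
  (forall L K : mxser C (r + s), inAL L -> inAK K -> mulS L K 0%N = 0).
Proof.
move=> C; split; [|split; [|split; [|split; [|split]]]].
- split; split.
  + exact: inAK0.
  + by move=> K1 K2 AK1 AK2; split; [apply: inAKD|apply: inAKN|apply: inAK_mulr].
  + exact: inAL0.
  + by move=> L1 L2 AL1 AL2; split; [apply: inALD|apply: inALN|apply: inAL_mull].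
- split=> [K AK_K detK | L AL_L detL].
  + exact/AK_inv/unscaleK0_unit.
  + exact/AL_inv/unscaleL0_unit.
- by move=> K; apply: detS_AK.
- by move=> L; apply: detS_AL.
- by split=> [K M|M L]; [apply: inAK_mulr|apply: inAL_mull].
- exact: mulS_AL_AK0.
Qed.
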